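(* Let $(X_m)_{m\in\mathbb{N}}$ be subspaces of $L_2(0,1)$ with $\dim X_m=m$, and let $Q_m$ denote the orthogonal projection in $L_2(0,1)$ (with its usual inner product) onto $X_m$. Assume there is a constant $L<\infty$ such that $$\inf\{\|x-z\|_0:\ z\in X_m\}\le \frac{L}{m}\|x\|_{1,0}\qquad\text{for all }x\in H_1(0,1),\ m\in\mathbb{N}.$$ Let $\sigma>0$, and define $Q_m^\sigma:=D_\sigma Q_m D_\sigma^{-1}$. Then each $Q_m^\sigma$ is an orthogonal projection with respect to $\langle\cdot,\cdot\rangle_\sigma$ onto the space $D_\sigma X_m$, and $$\inf\{\|x-z\|_\sigma:\ z\in D_\sigma X_m\}\le \frac{\sqrt2(1+\sigma)L}{m}\|x\|_{1,\sigma}\qquad\text{for all }x\in H_1^\sigma(0,1),\ m\in\mathbb{N}.$$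
   Context: All functions are real-valued. For $\sigma\ge0$, $L_2^\sigma(0,1)$ denotes $L_2(0,1)$ equipped with the inner product $\langle x,y\rangle_\sigma=\int_0^1 e^{-2\sigma t}x(t)y(t)\,dt$ and norm $\|x\|_\sigma^2=\int_0^1 e^{-2\sigma t}x(t)^2\,dt$ (so $\|\cdot\|_0$ is the usual $L_2$ norm). $H_1^\sigma(0,1)$ denotes the space of absolutely continuous $x$ with weak derivative $x'\in L_2(0,1)$, with norm $\|x\|_{1,\sigma}:=\frac12\left(\|x\|_\sigma^2+\|x'\|_\sigma^2\right)^{1/2}$; $H_1(0,1)=H_1^0(0,1)$. With $f_\sigma(t)=e^{\sigma t}$, $D_\sigma x:=f_\sigma x$ is the multiplication operator (an isometry from $L_2(0,1)$ onto $L_2^\sigma(0,1)$). *)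

From mathcomp Require Import all_boot all_order all_algebra.
From mathcomp Require Import all_classical all_reals all_analysis.
Set Implicit Arguments. Unset Strict Implicit. Unset Printing Implicit Defensive.
Import Order.TTheory GRing.Theory Num.Theory.
Local Open Scope classical_set_scope.
Local Open Scope ring_scope.

Section Defs.
Variable R : realType.
Local Notation mu := (@lebesgue_measure R).

(* x is (a representative of) an element of L_2(0,1) *)
Definition L2 (x : R -> R) : Prop :=
  measurable_fun `[(0:R), (1:R)] x /\
  mu.-integrable `[(0:R), (1:R)] (fun t => ((x t) ^+ 2)%:E).

Definition ip (s : R) (x y : R -> R) : R :=
  Rintegral mu `[(0:R), (1:R)] (fun t => expR (- (2 * s * t)) * x t * y t).

Definition nrm (s : R) (x : R -> R) : R := Num.sqrt (ip s x x).

(* x in H_1(0,1) with (weak) derivative x' in L_2(0,1):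
   x is absolutely continuous on [0,1], x(t) = x(0) + int_0^t x'. *)
Definition H1 (x x' : R -> R) : Prop :=
  L2 x' /\ forall t, 0 <= t <= 1 -> x t = x 0 + Rintegral mu `[(0:R), t] x'.

Definition nrm1 (s : R) (x x' : R -> R) : R :=
  2^-1 * Num.sqrt (nrm s x ^+ 2 + nrm s x' ^+ 2).

Definition Dsig (s : R) (x : R -> R) : R -> R := fun t => expR (s * t) * x t.
Definition Dsiginv (s : R) (x : R -> R) : R -> R := fun t => expR (- (s * t)) * x t.

(* V is an m-dimensional subspace of L_2(0,1): spanned by m elements of L_2
   that are linearly independent in L_2 (a combination that vanishes in L_2,
   i.e. has zero L_2 norm, is trivial). *)
Definition is_dim_subspace (V : set (R -> R)) (m : nat) : Prop :=
  exists b : 'I_m -> R -> R,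
    (forall i, L2 (b i)) /\
    (forall c : 'I_m -> R,
        nrm 0 (fun t => \sum_(i < m) c i * b i t) = 0 -> forall i, c i = 0) /\
    V = [set z | exists c : 'I_m -> R, z = (fun t => \sum_(i < m) c i * b i t)].

Definition is_orth_proj (s : R) (V : set (R -> R)) (P : (R -> R) -> (R -> R)) : Prop :=
  forall x, L2 x -> V (P x) /\ forall z, V z -> ip s (fun t => x t - P x t) z = 0.

Definition dist (s : R) (x : R -> R) (V : set (R -> R)) : R :=
  inf [set nrm s (fun t => x t - z t) | z in V].

End Defs.

(* D_sigma^-1 is an isometry from L_2^sigma onto L_2, so it turns orthogonality for
   <.,.>_sigma into orthogonality in L_2 (whence the projection property) and gives
   dist_sigma(x, D_sigma X_m) = dist_0(D_sigma^-1 x, X_m).  For x in H_1 with derivative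
   x', the function y = e^{-sigma t} x is again in H_1 with y' = e^{-sigma t} (x' - sigma x),
   ||y||_0 = ||x||_sigma and ||y'||_0^2 <= 2 ||x'||_sigma^2 + 2 sigma^2 ||x||_sigma^2, so
   ||y||_{1,0} <= sqrt 2 (1 + sigma) ||x||_{1,sigma}; the approximation hypothesis applied
   to y then gives the bound (L >= 0 since the hypothesis holds for the constant 1).
   The product rule for y, where x is only absolutely continuous, follows from integration
   by parts for continuous x' and density of continuous functions in L_1. *)

From mathcomp Require Import all_boot all_order all_algebra.
From mathcomp Require Import all_classical all_reals all_analysis.
From mathcomp Require Import measurable_realfun.
From mathcomp Require Import ring lra.
Import Order.TTheory GRing.Theory Num.Theory.
Import numFieldNormedType.Exports.
Local Open Scope classical_set_scope.
Local Open Scope ring_scope.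

Section WeightedL2.
Context {R : realType}.
Local Notation mu := (@lebesgue_measure R).

Lemma continuous_expRN_mul (c : R) : continuous (fun t : R => expR (- (c * t))).
Proof.
move=> t; apply: continuous_comp; last exact: continuous_expR.
by apply: continuousN; apply: continuousM; [exact: cst_continuous|exact: cvg_id].
Qed.

Lemma measurable_expRN_mul (c : R) (A : set R) :
  measurable_fun A (fun t : R => expR (- (c * t))).
Proof.
exact: measurable_funS (continuous_measurable_fun (continuous_expRN_mul c)).
Qed.

Lemma expRN_mul_le1 (s u : R) : 0 <= s -> 0 <= u -> expR (- (s * u)) <= 1.
Proof. by move=> s0 u0; rewrite expR_le1 oppr_le0 mulr_ge0. Qed.

Lemma expRN_mul_derive (s u : R) :
  derivable (fun v : R => expR (- (s * v))) u 1 /\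
  (fun v : R => expR (- (s * v)))^`()%classic u = - s * expR (- (s * u)).
Proof.
have [lin_derivable lin_derive] : is_derive u 1 (fun v : R => - (s * v)) (- s).
  apply: (is_derive_eq (is_deriveN (is_deriveZ s (@is_derive_id _ _ u 1)))).
  by rewrite /GRing.scale /= mulr1.
have exp_derivable := @derivable_expR R (- (s * u)).
have -> : (fun v : R => expR (- (s * v))) = expR \o (fun v : R => - (s * v)) by [].
split; last by rewrite derive1_comp // !derive1E derive_val lin_derive mulrC.
by apply/derivable1_diffP; apply: differentiable_comp; exact/derivable1_diffP.
Qed.

Lemma expRN_mul_derivable_oo_LRcontinuous (s a b : R) :
  derivable_oo_LRcontinuous (fun v : R => expR (- (s * v))) a b.
Proof.
split; first by move=> u _; have [] := expRN_mul_derive s u.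
- by apply: cvg_at_right_filter; exact: continuous_expRN_mul.
- by apply: cvg_at_left_filter; exact: continuous_expRN_mul.
Qed.

Lemma within_continuousD {A : set R} {f g : R -> R} :
  {within A, continuous f} -> {within A, continuous g} ->
  {within A, continuous (fun u => f u + g u)}.
Proof. by move=> cf cg x; apply: continuousD; [exact: cf|exact: cg]. Qed.

Lemma within_continuousM {A : set R} {f g : R -> R} :
  {within A, continuous f} -> {within A, continuous g} ->
  {within A, continuous (fun u => f u * g u)}.
Proof. by move=> cf cg x; apply: continuousM; [exact: cf|exact: cg]. Qed.

Lemma integrable_within_continuous {a b : R} {f : R -> R} :
  {within `[a, b], continuous f} -> mu.-integrable `[a, b] (EFin \o f).
Proof.
by move=> cf; apply: continuous_compact_integrable => //; exact: segment_compact.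
Qed.

Lemma continuous_FTC1_itv (a b : R) (g : R -> R) : a < b -> continuous g ->
  derivable_oo_LRcontinuous (fun u => \int[mu]_(v in `[a, u]) g v) a b /\
  {in `]a, b[, (fun u => \int[mu]_(v in `[a, u]) g v)^`()%classic =1 g}.
Proof.
move=> ab cg.
have ig : mu.-integrable `[a, b] (EFin \o g).
  by apply: integrable_within_continuous; exact: continuous_subspaceT.
have FTC1 u : u \in `]a, b[ -> derivable (fun u => \int[mu]_(v in `[a, u]) g v) u 1 /\
    (fun u => \int[mu]_(v in `[a, u]) g v)^`()%classic u = g u.
  by rewrite in_itv /= => /andP[au ub]; exact: continuous_FTC1_closed ub ig au (cg u).
have [_ ? ?] := (continuous_within_itvP _ ab).1
  (parameterized_integral_continuous (ltW ab) ig).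
by split; [split => // u /FTC1[]|move=> u /FTC1[]].
Qed.

Lemma le_integrableR {a b : R} (f g : R -> R) :
  measurable_fun `[a, b] f -> (forall t, t \in `[a, b] -> `|f t| <= `|g t|) ->
  mu.-integrable `[a, b] (EFin \o g) -> mu.-integrable `[a, b] (EFin \o f).
Proof. by move=> mf fg; apply: le_integrable => //; exact/measurable_EFinP. Qed.

Lemma integrableRD {a b : R} (f g : R -> R) :
  mu.-integrable `[a, b] (EFin \o f) -> mu.-integrable `[a, b] (EFin \o g) ->
  mu.-integrable `[a, b] (EFin \o (fun u => f u + g u)).
Proof. by move=> fi gi; apply: (eq_integrable _ _ _ _ (integrableD _ fi gi)). Qed.

Lemma integrableRB {a b : R} (f g : R -> R) :
  mu.-integrable `[a, b] (EFin \o f) -> mu.-integrable `[a, b] (EFin \o g) ->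
  mu.-integrable `[a, b] (EFin \o (fun u => f u - g u)).
Proof. by move=> fi gi; apply: (eq_integrable _ _ _ _ (integrableB _ fi gi)). Qed.

Lemma integrableRZl {a b : R} (k : R) (f : R -> R) :
  mu.-integrable `[a, b] (EFin \o f) ->
  mu.-integrable `[a, b] (EFin \o (fun u => k * f u)).
Proof. by move=> fi; apply: (eq_integrable _ _ _ _ (integrableZl _ k fi)). Qed.

Lemma integrable_expRN_mulr (s a b : R) (h : R -> R) : 0 <= s -> 0 <= a ->
  mu.-integrable `[a, b] (EFin \o h) ->
  mu.-integrable `[a, b] (EFin \o (fun u => expR (- (s * u)) * h u)).
Proof.
move=> s0 a0 ih; apply: (le_integrableR _ h _ _ ih).
  apply: measurable_funM; first exact: measurable_expRN_mul.
  by apply/measurable_EFinP; exact: measurable_int ih.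
move=> u; rewrite /= in_itv /= => /andP[au _].
rewrite normrM ger0_norm ?expR_ge0 // ler_piMl // expRN_mul_le1 //.
exact: le_trans au.
Qed.

Lemma lebesgue_measure_itv0 (t : R) : 0 <= t -> fine (mu `[0, t]) = t.
Proof.
move=> t0; rewrite lebesgue_measure_itv /= lte_fin.
by case: ltP => [_|t_le0] /=; [rewrite subr0|apply/eqP; rewrite eq_le t0 t_le0].
Qed.

Lemma le_normr_Rintegral_subitv (a u b : R) (h : R -> R) : u <= b ->
  mu.-integrable `[a, b] (EFin \o h) ->
  `|\int[mu]_(v in `[a, u]) h v| <= \int[mu]_(v in `[a, b]) `|h v|.
Proof.
move=> ub ih; have ia := integrable_norm ih.
have sub : `[a, u] `<=` `[a, b] by apply: subset_itvl; rewrite bnd_simp.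
have ihu : mu.-integrable `[a, u] (EFin \o h) by apply: integrableS ih.
have iau : mu.-integrable `[a, u] (EFin \o (Num.norm \o h)) by apply: integrableS ia.
apply: le_trans (le_normr_Rintegral _ ihu) _ => //.
apply: fine_le; [exact: integrable_fin_num iau|exact: integrable_fin_num ia|].
by apply: ge0_subset_integral => //; exact: measurable_int ia.
Qed.

Lemma sqrrB_le (a b : R) : (a - b) ^+ 2 <= 2 * a ^+ 2 + 2 * b ^+ 2.
Proof. by rewrite -subr_ge0 (_ : _ - _ = (a + b) ^+ 2) ?sqr_ge0 //; ring. Qed.

Lemma L2_integrable (f : R -> R) : L2 f -> mu.-integrable `[0, 1] (EFin \o f).
Proof.
move=> [mf f2]; apply: (le_integrableR _ (fun t => 1 + f t ^+ 2) mf).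
  move=> t _; rewrite -[f t ^+ 2](real_normK (num_real _)).
  have := normr_ge0 (f t); set b := `|f t| => b0.
  by rewrite ger0_norm; [nra|rewrite addr_ge0 // exprn_ge0].
apply: integrableRD f2; apply: integrable_within_continuous.
exact/continuous_subspaceT/cst_continuous.
Qed.

Lemma L2B (f g : R -> R) : L2 f -> L2 g -> L2 (fun t => f t - g t).
Proof.
move=> [mf f2] [mg g2]; split; first exact: measurable_funB.
apply: (le_integrableR _ (fun t => 2 * f t ^+ 2 + 2 * g t ^+ 2)).
- by apply: measurable_funX; exact: measurable_funB.
- move=> t _; rewrite !ger0_norm ?sqr_ge0 ?sqrrB_le //.
  by rewrite addr_ge0 // mulr_ge0 // sqr_ge0.
- by apply: integrableRD; exact: integrableRZl.
Qed.

Lemma L2Z (k : R) (f : R -> R) : L2 f -> L2 (fun t => k * f t).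
Proof.
move=> [mf f2]; split; first exact: measurable_funM.
apply: (eq_integrable _ _ _ _ (integrableRZl (k ^+ 2) _ f2)) => //= t _.
by rewrite exprMn.
Qed.

Lemma integrable_ip_integrand (s : R) (f : R -> R) : 0 <= s -> L2 f ->
  mu.-integrable `[0, 1] (EFin \o (fun t => expR (- (2 * s * t)) * f t * f t)).
Proof.
move=> s0 [mf f2]; apply: (le_integrableR _ (fun t => f t ^+ 2) _ _ f2).
  by apply: measurable_funM => //; apply: measurable_funM => //;
    exact: measurable_expRN_mul.
move=> t; rewrite in_itv /= => /andP[t0 _].
rewrite -mulrA -expr2 normrM ger0_norm ?expR_ge0 // ler_piMl //.
by rewrite expRN_mul_le1 // mulr_ge0.
Qed.

Lemma ip_ge0 (s : R) (x : R -> R) : 0 <= ip s x x.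
Proof.
apply: Rintegral_ge0 => t _; rewrite -mulrA mulr_ge0 ?expR_ge0 //.
by rewrite -expr2 sqr_ge0.
Qed.

Lemma ip_Dsiginv (s : R) (x y : R -> R) :
  ip 0 (Dsiginv s x) (Dsiginv s y) = ip s x y.
Proof.
rewrite /ip; apply: eq_Rintegral => t _.
rewrite /Dsiginv mulr0 mul0r oppr0 expR0 mul1r.
by rewrite (_ : - (2 * s * t) = - (s * t) + - (s * t)) ?expRD; ring.
Qed.

Lemma nrm_Dsiginv (s : R) (x : R -> R) : nrm 0 (Dsiginv s x) = nrm s x.
Proof. by rewrite /nrm ip_Dsiginv. Qed.

Lemma Dsiginv_Dsig (s : R) (z : R -> R) : Dsiginv s (Dsig s z) = z.
Proof.
by apply/funext => t; rewrite /Dsiginv /Dsig mulrA -expRD addNr expR0 mul1r.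
Qed.

Lemma DsiginvB (s : R) (x y : R -> R) :
  Dsiginv s (fun t => x t - y t) = (fun t => Dsiginv s x t - Dsiginv s y t).
Proof. by apply/funext => t; rewrite /Dsiginv mulrBr. Qed.

Lemma L2_Dsiginv (s : R) (x : R -> R) : 0 <= s -> L2 x -> L2 (Dsiginv s x).
Proof.
move=> s0 Lx; split.
  by apply: measurable_funM; [exact: measurable_expRN_mul|exact: Lx.1].
apply: (eq_integrable _ _ _ _ (integrable_ip_integrand _ _ s0 Lx)) => //= t _.
congr EFin; rewrite /Dsiginv.
by rewrite (_ : - (2 * s * t) = - (s * t) + - (s * t)) ?expRD; ring.
Qed.

Lemma continuous_dense_eq0 (a b K : R) (Phi : (R -> R) -> R) :
  (forall f g, mu.-integrable `[a, b] (EFin \o f) ->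
     mu.-integrable `[a, b] (EFin \o g) -> Phi (fun u => f u - g u) = Phi f - Phi g) ->
  (forall h, mu.-integrable `[a, b] (EFin \o h) ->
     `|Phi h| <= K * \int[mu]_(u in `[a, b]) `|h u|) ->
  (forall g, continuous g -> Phi g = 0) ->
  forall f, mu.-integrable `[a, b] (EFin \o f) -> Phi f = 0.
Proof.
move=> PhiB PhiK Phi0 f fi.
have ab_fin : (mu `[a, b] < +oo)%E.
  by rewrite lebesgue_measure_itv /=; case: ifP => _; rewrite -?EFinD ltry.
have [//|g_ [cg gi fg]] := approximation_continuous_integrable _ ab_fin fi.
pose d n := \int[mu]_(u in `[a, b]) `|f u - g_ n u|.
have Kd0 : K * d n @[n --> \oo] --> K * 0.
  by apply: cvgM; [exact: cvg_cst|exact: fine_cvg fg].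
have Phif_le n : `|Phi f| <= K * d n.
  rewrite -[Phi f]subr0 -(Phi0 _ (cg n)) -PhiB //.
  by apply: PhiK; exact: integrableRB.
apply/eqP; rewrite -normr_le0 -(mulr0 K) -(cvg_lim _ Kd0) //.
by apply: limr_ge; [exact: cvgP Kd0|exact: nearW].
Qed.

Lemma integrable_expRN_mul_primitive (s t : R) (f : R -> R) : 0 <= t ->
  mu.-integrable `[0, t] (EFin \o f) ->
  mu.-integrable `[0, t]
    (EFin \o (fun u => expR (- (s * u)) * \int[mu]_(v in `[0, u]) f v)).
Proof.
move=> t0 fi; apply: integrable_within_continuous; apply: within_continuousM.
  exact/continuous_subspaceT/continuous_expRN_mul.
exact: parameterized_integral_continuous t0 fi.
Qed.

Section ExpRNParts.
Variables (s t : R).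
Hypotheses (s0 : 0 <= s) (t0 : 0 <= t).

Let t_eq0_or_gt0 : t = 0 \/ 0 < t.
Proof. by move: t0; rewrite le_eqVlt => /predU1P[<-|]; [left|right]. Qed.

Let dexpRN_within_continuous :
  {within `[0, t], continuous (fun u => - s * expR (- (s * u)))}.
Proof.
apply: within_continuousM; first exact/continuous_subspaceT/cst_continuous.
exact/continuous_subspaceT/continuous_expRN_mul.
Qed.

Let expRN_derive1 : {in `]0, t[, (fun u => expR (- (s * u)))^`()%classic =1
  (fun u => - s * expR (- (s * u)))}.
Proof. by move=> u _; have [] := expRN_mul_derive s u. Qed.

Lemma Rintegral_expRN_mul :
  s * \int[mu]_(u in `[0, t]) expR (- (s * u)) = 1 - expR (- (s * t)).
Proof.
case: t_eq0_or_gt0 => [->|t_gt0].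
  by rewrite set_itv1 Rintegral_set1 [in RHS]mulr0 oppr0 expR0 subrr; ring.
have FTC2 :
    \int[mu]_(u in `[0, t]) (- s * expR (- (s * u))) = expR (- (s * t)) - 1.
  rewrite /Rintegral (continuous_FTC2 t_gt0 dexpRN_within_continuous
    (expRN_mul_derivable_oo_LRcontinuous s 0 t) expRN_derive1).
  by rewrite -EFinB /= mulr0 oppr0 expR0.
rewrite RintegralZl // in FTC2; last first.
  exact/integrable_within_continuous/continuous_subspaceT/continuous_expRN_mul.
by rewrite -[LHS]opprK -mulNr FTC2 opprB.
Qed.

(* Rintegration_by_parts needs a continuous integrand; as this defect is linear and
   bounded by the L_1 norm, it vanishes on all integrable functions by density. *)
Let parts_defect (f : R -> R) : R :=
  \int[mu]_(u in `[0, t]) (expR (- (s * u)) * f u)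
  - expR (- (s * t)) * \int[mu]_(v in `[0, t]) f v
  - s * \int[mu]_(u in `[0, t]) (expR (- (s * u)) * \int[mu]_(v in `[0, u]) f v).

Let parts_defect_continuous (g : R -> R) : continuous g -> parts_defect g = 0.
Proof.
move=> cg; rewrite /parts_defect.
case: t_eq0_or_gt0 => [->|t_gt0]; first by rewrite !set_itv1 !Rintegral_set1; ring.
have [dG G'] := continuous_FTC1_itv _ _ _ t_gt0 cg.
rewrite (Rintegration_by_parts t_gt0 dexpRN_within_continuous
  (expRN_mul_derivable_oo_LRcontinuous s 0 t) expRN_derive1
  (continuous_subspaceT cg) dG G').
rewrite set_itv1 Rintegral_set1 mulr0 subr0.
have -> : \int[mu]_(u in `[0, t])
      (- s * expR (- (s * u)) * \int[mu]_(v in `[0, u]) g v) =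
    - s * \int[mu]_(u in `[0, t]) (expR (- (s * u)) * \int[mu]_(v in `[0, u]) g v).
  rewrite -RintegralZl //; first by apply: eq_Rintegral => u _; rewrite mulrA.
  apply: integrable_expRN_mul_primitive => //.
  exact/integrable_within_continuous/continuous_subspaceT.
by ring.
Qed.

Let parts_defectB (f g : R -> R) : mu.-integrable `[0, t] (EFin \o f) ->
  mu.-integrable `[0, t] (EFin \o g) ->
  parts_defect (fun u => f u - g u) = parts_defect f - parts_defect g.
Proof.
move=> fi gi.
have primB u : u \in `[0, t] ->
    \int[mu]_(v in `[0, u]) (f v - g v) =
    \int[mu]_(v in `[0, u]) f v - \int[mu]_(v in `[0, u]) g v.
  rewrite in_itv /= => /andP[_ ut]; have sub : `[0, u] `<=` `[0, t].
    by apply: subset_itvl; rewrite bnd_simp.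
  by rewrite RintegralB //; [exact: integrableS fi|exact: integrableS gi].
rewrite /parts_defect primB ?in_itv /= ?lexx ?t0 //.
have -> : \int[mu]_(u in `[0, t]) (expR (- (s * u)) * (f u - g u)) =
    \int[mu]_(u in `[0, t]) (expR (- (s * u)) * f u) -
    \int[mu]_(u in `[0, t]) (expR (- (s * u)) * g u).
  rewrite -RintegralB //; first by apply: eq_Rintegral => u _; ring.
  - exact: integrable_expRN_mulr.
  - exact: integrable_expRN_mulr.
have -> : \int[mu]_(u in `[0, t])
      (expR (- (s * u)) * \int[mu]_(v in `[0, u]) (f v - g v)) =
    \int[mu]_(u in `[0, t]) (expR (- (s * u)) * \int[mu]_(v in `[0, u]) f v) -
    \int[mu]_(u in `[0, t]) (expR (- (s * u)) * \int[mu]_(v in `[0, u]) g v).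
  rewrite -RintegralB //; last 2 first.
  - exact: integrable_expRN_mul_primitive _ _ _ t0 fi.
  - exact: integrable_expRN_mul_primitive _ _ _ t0 gi.
  by apply: eq_Rintegral => u /set_mem ut; rewrite primB //; ring.
by ring.
Qed.

Let parts_defect_le (h : R -> R) : mu.-integrable `[0, t] (EFin \o h) ->
  `|parts_defect h| <= (2 + s * t) * \int[mu]_(u in `[0, t]) `|h u|.
Proof.
move=> hi; set I := \int[mu]_(u in `[0, t]) `|h u|.
have ihi := integrable_norm hi.
have prim_le u : u \in `[0, t] -> `|\int[mu]_(v in `[0, u]) h v| <= I.
  by rewrite in_itv /= => /andP[_ ut]; exact: le_normr_Rintegral_subitv.
have E_le u : u \in `[0, t] -> `|expR (- (s * u))| <= 1.
  rewrite in_itv /= => /andP[u0 _].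
  by rewrite ger0_norm ?expR_ge0 // expRN_mul_le1.
have first_le : `|\int[mu]_(u in `[0, t]) (expR (- (s * u)) * h u)| <= I.
  have Ehi := integrable_expRN_mulr _ _ _ _ s0 (lexx 0) hi.
  apply: le_trans (le_normr_Rintegral _ Ehi) _ => //.
  apply: le_Rintegral => //; first exact: integrable_norm Ehi.
  - by move=> u ut /=; rewrite normrM ler_piMl // E_le.
have second_le : `|expR (- (s * t)) * \int[mu]_(v in `[0, t]) h v| <= I.
  have t_in : t \in `[0, t] by rewrite in_itv /= lexx t0.
  by rewrite normrM -[I]mul1r ler_pM // ?E_le ?prim_le.
have third_le : `|s * \int[mu]_(u in `[0, t]) (expR (- (s * u)) *
    \int[mu]_(v in `[0, u]) h v)| <= s * t * I.
  rewrite normrM ger0_norm // -mulrA ler_wpM2l //.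
  have EHi := integrable_expRN_mul_primitive s _ _ t0 hi.
  apply: le_trans (le_normr_Rintegral _ EHi) _ => //.
  apply: le_trans (_ : _ <= \int[mu]_(u in `[0, t]) I) _.
    apply: le_Rintegral => //.
    - exact: integrable_norm EHi.
    - exact/integrable_within_continuous/continuous_subspaceT/cst_continuous.
    - move=> u ut /=; rewrite normrM -[I]mul1r.
      by apply: ler_pM => //; [exact: E_le|exact: prim_le].
  by rewrite Rintegral_cst // lebesgue_measure_itv0 // mulrC.
apply: le_trans (ler_normB _ _) _; rewrite mulrDl mulr_natl mulr2n.
exact: lerD (le_trans (ler_normB _ _) (lerD first_le second_le)) third_le.
Qed.

Lemma Rintegral_expRN_mul_parts (f : R -> R) : mu.-integrable `[0, t] (EFin \o f) ->
  \int[mu]_(u in `[0, t]) (expR (- (s * u)) * f u) =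
  expR (- (s * t)) * \int[mu]_(u in `[0, t]) f u +
  s * \int[mu]_(u in `[0, t]) (expR (- (s * u)) * \int[mu]_(v in `[0, u]) f v).
Proof.
move=> fi.
have := continuous_dense_eq0 _ _ _ _
  parts_defectB parts_defect_le parts_defect_continuous f fi.
by rewrite /parts_defect; lra.
Qed.

End ExpRNParts.

Lemma H1_L2 (x x' : R -> R) : H1 x x' -> L2 x.
Proof.
move=> [Lx' xE].
have cx : {within `[0, 1], continuous (fun u => x 0 + \int[mu]_(v in `[0, u]) x' v)}.
  apply: within_continuousD; first exact/continuous_subspaceT/cst_continuous.
  exact: parameterized_integral_continuous ler01 (L2_integrable _ Lx').
have xE' u : u \in `[0, 1] -> x u = x 0 + \int[mu]_(v in `[0, u]) x' v.
  by rewrite in_itv /=; exact: xE.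
split.
  apply: eq_measurable_fun (subspace_continuous_measurable_fun _ cx) => //.
  by move=> u /set_mem /xE'.
have cx2 := integrable_within_continuous (within_continuousM cx cx).
apply: (eq_integrable _ _ _ _ cx2) => //.
by move=> u /set_mem /xE' /= ->; rewrite expr2.
Qed.

Lemma H1_Dsiginv (s : R) (x x' : R -> R) : 0 <= s -> H1 x x' ->
  H1 (Dsiginv s x) (Dsiginv s (fun u => x' u - s * x u)).
Proof.
move=> s0 Hx; have Lx := H1_L2 _ _ Hx; have [Lx' xE] := Hx.
split; first by apply: L2_Dsiginv => //; apply: L2B => //; exact: L2Z.
move=> t /andP[t0 t1].
pose F u := \int[mu]_(v in `[0, u]) x' v.
have x'i : mu.-integrable `[0, t] (EFin \o x').
  apply: integrableS (L2_integrable _ Lx') => //.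
  by apply: subset_itvl; rewrite bnd_simp.
have i1 : mu.-integrable `[0, t] (EFin \o (fun u => expR (- (s * u)) * x' u)).
  exact: integrable_expRN_mulr.
have i2 : mu.-integrable `[0, t] (EFin \o (fun u => x 0 * expR (- (s * u)))).
  apply: integrableRZl; apply: integrable_within_continuous.
  exact/continuous_subspaceT/continuous_expRN_mul.
have i3 : mu.-integrable `[0, t] (EFin \o (fun u => expR (- (s * u)) * F u)).
  exact: integrable_expRN_mul_primitive.
rewrite /Dsiginv mulr0 oppr0 expR0 mul1r (xE t) ?t0 ?t1 //.
have -> : \int[mu]_(u in `[0, t]) (expR (- (s * u)) * (x' u - s * x u)) =
    \int[mu]_(u in `[0, t])
      (expR (- (s * u)) * x' u -
       s * (x 0 * expR (- (s * u)) + expR (- (s * u)) * F u)).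
  apply: eq_Rintegral => u; rewrite inE /= in_itv /= => /andP[u0 ut].
  by rewrite (xE u) ?u0 ?(le_trans ut t1) // /F; ring.
rewrite RintegralB //; last by apply: integrableRZl; exact: integrableRD.
rewrite RintegralZl ?integrableRD // RintegralD // RintegralZl //; last first.
  exact/integrable_within_continuous/continuous_subspaceT/continuous_expRN_mul.
rewrite Rintegral_expRN_mul_parts // [s * (_ + _)]mulrDr [s * (x 0 * _)]mulrCA.
rewrite Rintegral_expRN_mul //.
by rewrite -/(F t); ring.
Qed.

Lemma ip_subr_le (s k : R) (f g : R -> R) : 0 <= s -> L2 f -> L2 g ->
  ip s (fun t => f t - k * g t) (fun t => f t - k * g t) <=
  2 * ip s f f + 2 * k ^+ 2 * ip s g g.
Proof.
move=> s0 Lf Lg; have Lfg := L2B _ _ Lf (L2Z k _ Lg).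
have if_ := integrable_ip_integrand _ _ s0 Lf.
have ig := integrable_ip_integrand _ _ s0 Lg.
have ifg := integrable_ip_integrand _ _ s0 Lfg.
rewrite /ip -RintegralZl // -[in X in _ + X]RintegralZl // -RintegralD //;
  try by apply: integrableRZl.
apply: le_Rintegral => //; first by apply: integrableRD; exact: integrableRZl.
move=> t _; have := sqrrB_le (f t) (k * g t).
have := expR_ge0 (- (2 * s * t)); nra.
Qed.

Lemma half_sqrtD_le (s A B C : R) : 0 <= s -> 0 <= A -> 0 <= C ->
  B <= 2 * C + 2 * s ^+ 2 * A ->
  2^-1 * Num.sqrt (A + B) <= Num.sqrt 2 * (1 + s) * (2^-1 * Num.sqrt (A + C)).
Proof.
move=> s0 A0 C0 hB; rewrite mulrCA ler_wpM2l ?invr_ge0 //.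
have h : A + B <= (2 * (1 + s) ^+ 2) * (A + C) by nra.
apply: le_trans (ler_wsqrtr h) _.
rewrite (sqrtrM (A + C)); last by rewrite mulr_ge0 // sqr_ge0.
by rewrite (sqrtrM ((1 + s) ^+ 2)) // sqrtr_sqr ger0_norm // addr_ge0.
Qed.

Lemma nrm1_Dsiginv_le (s : R) (x x' : R -> R) : 0 <= s -> L2 x -> L2 x' ->
  nrm1 0 (Dsiginv s x) (Dsiginv s (fun t => x' t - s * x t)) <=
  Num.sqrt 2 * (1 + s) * nrm1 s x x'.
Proof.
move=> s0 Lx Lx'; rewrite /nrm1 /nrm !sqr_sqrtr ?ip_ge0 // !ip_Dsiginv.
by apply: half_sqrtD_le; rewrite ?ip_ge0 // ip_subr_le.
Qed.

Lemma is_orth_proj_Dsig (s : R) (V : set (R -> R)) (P : (R -> R) -> R -> R) :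
  0 <= s -> is_orth_proj 0 V P ->
  is_orth_proj s (Dsig s @` V) (fun x => Dsig s (P (Dsiginv s x))).
Proof.
move=> s0 HP x Lx; have [VPx orthPx] := HP _ (L2_Dsiginv _ _ s0 Lx).
split; first by exists (P (Dsiginv s x)).
by move=> _ [z Vz <-]; rewrite -ip_Dsiginv DsiginvB !Dsiginv_Dsig orthPx.
Qed.

Lemma dist_Dsig (s : R) (x : R -> R) (V : set (R -> R)) :
  dist s x (Dsig s @` V) = dist 0 (Dsiginv s x) V.
Proof.
have nrmE z : nrm s (fun t => x t - Dsig s z t) = nrm 0 (fun t => Dsiginv s x t - z t).
  by rewrite -nrm_Dsiginv DsiginvB Dsiginv_Dsig.
rewrite /dist; congr inf; apply/seteqP; split => r.
  by case=> _ [z Vz <-] <-; exists z; rewrite ?nrmE.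
by case=> z Vz <-; exists (Dsig s z); [exists z|rewrite nrmE].
Qed.

Lemma dist_ge0 (s : R) (x : R -> R) (V : set (R -> R)) : 0 <= dist s x V.
Proof.
rewrite /dist; set S := [set _ | _ in _].
have [[r Sr]|S0] := pselect (exists r, S r).
  by apply: lb_le_inf; [exists r|move=> _ [z _ <-]; exact: sqrtr_ge0].
rewrite (_ : S = set0) ?inf0 //; apply/seteqP; split => // r Sr.
by apply: S0; exists r.
Qed.

Lemma approx_coef_ge0 (V : set (R -> R)) (c : R) :
  (forall x x', H1 x x' -> dist 0 x V <= c * nrm1 0 x x') -> 0 <= c.
Proof.
have one_H1 : H1 (fun _ : R => 1) (fun _ => 0).
  split; last by move=> t _; rewrite Rintegral_cst // mul0r addr0.
  split; first exact: measurable_cst.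
  by rewrite expr0n; exact: integrable0.
have one_nrm1 : nrm1 0 (fun _ : R => 1) (fun _ => 0) = 2^-1.
  rewrite /nrm1 /nrm /ip.
  under eq_Rintegral do rewrite mulr0 mul0r oppr0 expR0 !mulr1.
  under [X in _ + Num.sqrt X ^+ 2]eq_Rintegral do rewrite mulr0.
  rewrite !Rintegral_cst // lebesgue_measure_itv0 // mul1r mul0r sqrtr1 sqrtr0.
  by rewrite expr1n expr0n addr0 sqrtr1 mulr1.
move=> /(_ _ _ one_H1); rewrite one_nrm1 => /(le_trans (dist_ge0 _ _ _)).
by rewrite pmulr_lge0 // invr_gt0.
Qed.

End WeightedL2.

Theorem lemma2p6 (R : realType) (X : nat -> set (R -> R))
  (Q : nat -> (R -> R) -> (R -> R)) (L s : R) :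
  (forall m : nat, (0 < m)%N -> is_dim_subspace (X m) m) ->
  (forall m : nat, (0 < m)%N -> is_orth_proj 0 (X m) (Q m)) ->
  (forall (x x' : R -> R) (m : nat), (0 < m)%N -> H1 x x' ->
      dist 0 x (X m) <= L / m%:R * nrm1 0 x x') ->
  0 < s ->
  forall m : nat, (0 < m)%N ->
    is_orth_proj s (Dsig s @` X m) (fun x => Dsig s (Q m (Dsiginv s x))) /\
    (forall x x' : R -> R, H1 x x' ->
      dist s x (Dsig s @` X m) <= Num.sqrt 2 * (1 + s) * L / m%:R * nrm1 s x x').
Proof.
move=> _ HQ Happrox s_gt0 m m_gt0; have s0 := ltW s_gt0.
split; first exact: is_orth_proj_Dsig _ _ _ s0 (HQ m m_gt0).
move=> x x' Hx; have Lm0 := approx_coef_ge0 _ _ (fun x x' => Happrox x x' m m_gt0).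
rewrite dist_Dsig; apply: le_trans (Happrox _ _ m m_gt0 (H1_Dsiginv _ _ _ s0 Hx)) _.
rewrite (_ : _ * L / m%:R * _ = L / m%:R * (Num.sqrt 2 * (1 + s) * nrm1 s x x'));
  last by ring.
apply: ler_wpM2l => //; apply: nrm1_Dsiginv_le => //; [exact: H1_L2 Hx|exact: Hx.1].
Qed.
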